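(* Let $f(x)=\frac{1}{\sqrt{2\pi}}\ln(1+x)$ for $x\ge0$, let $d>0$, let $u(x)=\frac1d(e+x)\big(\ln(e+x)\big)^2$, and let $g(x)=u(f(x))-f(x)$. Then: 1. If $0<d\le1$, then $g\ge f$ and $g$ is increasing on $[0,\infty)$. 2. $\int_0^\infty\frac{f'(x)}{f(x)+g(x)}\,dx=d$. *)

From Stdlib Require Import Reals.
From Coquelicot Require Import Coquelicot.
Open Scope R_scope.

Definition f_ln (x : R) : R := / sqrt (2 * PI) * ln (1 + x).

Definition u_fn (d x : R) : R := / d * (exp 1 + x) * (ln (exp 1 + x)) ^ 2.

Definition g_fn (d x : R) : R := u_fn d (f_ln x) - f_ln x.

From Stdlib Require Import Reals Lra.
From Coquelicot Require Import Coquelicot.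
Open Scope R_scope.

(* Since [f + g = u o f], the integrand is [f' / u(f)], whose antiderivative is
   [-d / ln (e + f)]; this tends to [0] at infinity and equals [-d] at [0].
   For part 1 write [t = f x >= 0], so that [g x = u t - t]; when [d <= 1],
   [u t >= (e + t) ln (e + t)^2], which dominates [2 t] and grows faster than [t]. *)

Lemma is_RInt_gen_pinfty_derive (f F : R -> R) (a l : R) :
  (forall x, a <= x -> is_derive F x (f x)) ->
  (forall x, a <= x -> continuous f x) ->
  is_lim F p_infty l ->
  is_RInt_gen f (at_point a) (Rbar_locally p_infty) (l - F a).
Proof.
  intros HF Hf Hlim.
  apply (filterlimi_lim_ext_loc (fun ab => F (snd ab) - F a)).
  - apply (Filter_prod _ _ _ (fun x => x = a) (fun y => a < y));
      [reflexivity | now exists a |].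
    intros a' b -> Hb; simpl.
    apply (is_RInt_derive (V := R_CompleteNormedModule));
      rewrite Rmin_left, Rmax_right by lra; intros x Hx; [apply HF | apply Hf]; lra.
  - apply (filterlim_comp _ _ _ snd (fun y => F y - F a) _ (Rbar_locally p_infty)).
    + intros P HP.
      apply (Filter_prod _ _ _ (fun _ => True) P); [apply filter_true | exact HP | easy].
    + apply (filterlim_comp _ _ _ F (fun z => z - F a) _ (locally l)); [exact Hlim |].
      apply (continuous_minus (fun z => z) (fun _ => F a));
        [apply continuous_id | apply continuous_const].
Qed.

Lemma is_lim_ln_add (a : R) : is_lim (fun x => ln (a + x)) p_infty p_infty.
Proof.
  apply (is_lim_comp ln (fun x => a + x) p_infty p_infty p_infty).
  - exact is_lim_ln_p.
  - eapply is_lim_plus; [apply is_lim_const | apply is_lim_id | easy].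
  - now exists 0.
Qed.

Lemma le_Rinv_mul (d y : R) : 0 < d <= 1 -> 0 <= y -> y <= / d * y.
Proof.
  intros Hd Hy.
  assert (1 <= / d) by (rewrite <- Rinv_1; apply Rinv_le_contravar; lra).
  nra.
Qed.

Lemma inv_sqrt_2PI_pos : 0 < / sqrt (2 * PI).
Proof. apply Rinv_0_lt_compat, sqrt_lt_R0. pose proof PI_RGT_0. lra. Qed.

Lemma f_ln_0 : f_ln 0 = 0.
Proof. unfold f_ln. rewrite Rplus_0_r, ln_1. ring. Qed.

Lemma f_ln_ge0 (x : R) : 0 <= x -> 0 <= f_ln x.
Proof.
  intros Hx. unfold f_ln.
  apply Rmult_le_pos; [apply Rlt_le, inv_sqrt_2PI_pos |]. rewrite <- ln_1.
  apply ln_le; lra.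
Qed.

Lemma f_ln_lt (x y : R) : -1 < x -> x < y -> f_ln x < f_ln y.
Proof.
  intros Hx Hxy. unfold f_ln.
  apply Rmult_lt_compat_l; [apply inv_sqrt_2PI_pos |].
  apply ln_increasing; lra.
Qed.

Lemma is_derive_f_ln (x : R) : -1 < x -> is_derive f_ln x (/ sqrt (2 * PI) / (1 + x)).
Proof. intros Hx. unfold f_ln. auto_derive; [lra | unfold Rdiv; ring]. Qed.

Lemma continuous_Derive_f_ln (x : R) : -1 < x -> continuous (Derive f_ln) x.
Proof.
  intros Hx.
  apply (continuous_ext_loc _ (fun y => / sqrt (2 * PI) / (1 + y))).
  - assert (Hr : 0 < x + 1) by lra.
    exists (mkposreal _ Hr). intros y Hy.
    change (Rabs (y - x) < x + 1) in Hy. apply Rabs_def2 in Hy.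
    symmetry. apply is_derive_unique, is_derive_f_ln. lra.
  - apply (@ex_derive_continuous R_AbsRing R_NormedModule). auto_derive. lra.
Qed.

Lemma is_lim_f_ln : is_lim f_ln p_infty p_infty.
Proof.
  pose proof inv_sqrt_2PI_pos.
  replace p_infty with (Rbar_mult (/ sqrt (2 * PI)) p_infty) at 2.
  - apply is_lim_scal_l, is_lim_ln_add.
  - simpl. destruct Rle_dec; [destruct Rle_lt_or_eq_dec |]; easy || lra.
Qed.

Lemma f_ln_add_g_fn (d x : R) : f_ln x + g_fn d x = u_fn d (f_ln x).
Proof. unfold g_fn. ring. Qed.

Lemma u_fn_scale (d t : R) : u_fn d t = / d * u_fn 1 t.
Proof. unfold u_fn. rewrite Rinv_1. ring. Qed.

Lemma one_le_ln_e_add (t : R) : 0 <= t -> 1 <= ln (exp 1 + t).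
Proof.
  intros Ht. rewrite <- (ln_exp 1) at 1.
  apply ln_le; [apply exp_pos | lra].
Qed.

Lemma two_mul_le_u_fn1 (t : R) : 0 <= t -> 2 * t <= u_fn 1 t.
Proof.
  intros Ht. unfold u_fn. rewrite Rinv_1, Rmult_1_l.
  pose proof (one_le_ln_e_add t Ht) as HL.
  assert (He : 2 < exp 1) by (pose proof (exp_ineq1 1); lra).
  destruct (Rle_lt_dec t (exp 1)) as [Hte | Hte].
  - assert (1 <= ln (exp 1 + t) ^ 2) by nra. nra.
  - (* [ln (e + t) >= ln (2 e) = 1 + ln 2 > 3/2], so [ln (e + t)^2 > 2] *)
    assert (Hln : 1 + ln 2 <= ln (exp 1 + t)).
    { rewrite <- (ln_exp 1) at 1. rewrite <- ln_mult by lra.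
      apply ln_le; lra. }
    pose proof ln_lt_2.
    assert (2 <= ln (exp 1 + t) ^ 2) by nra. nra.
Qed.

Lemma u_fn1_sub_gt (s t : R) : 0 <= s -> s < t -> t - s < u_fn 1 t - u_fn 1 s.
Proof.
  intros Hs Hst. unfold u_fn. rewrite Rinv_1, !Rmult_1_l.
  pose proof (one_le_ln_e_add s Hs) as HLs. pose proof (exp_pos 1).
  assert (HL : ln (exp 1 + s) < ln (exp 1 + t)) by (apply ln_increasing; lra).
  set (Ls := ln (exp 1 + s)) in *. set (Lt := ln (exp 1 + t)) in *.
  assert (Ls ^ 2 < Lt ^ 2) by nra.
  assert (1 <= Ls ^ 2) by nra.
  assert (t - s <= (t - s) * Ls ^ 2) by nra.
  nra.
Qed.

Lemma two_mul_le_u_fn (d t : R) : 0 < d <= 1 -> 0 <= t -> 2 * t <= u_fn d t.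
Proof.
  intros Hd Ht. rewrite u_fn_scale.
  pose proof (two_mul_le_u_fn1 t Ht).
  pose proof (le_Rinv_mul d (u_fn 1 t) Hd ltac:(lra)). lra.
Qed.

Lemma u_fn_sub_id_lt (d s t : R) :
  0 < d <= 1 -> 0 <= s -> s < t -> u_fn d s - s < u_fn d t - t.
Proof.
  intros Hd Hs Hst. rewrite !(u_fn_scale d).
  pose proof (u_fn1_sub_gt s t Hs Hst).
  pose proof (le_Rinv_mul d (u_fn 1 t - u_fn 1 s) Hd ltac:(lra)). lra.
Qed.

Lemma f_ln_le_g_fn (d x : R) : 0 < d <= 1 -> 0 <= x -> f_ln x <= g_fn d x.
Proof.
  intros Hd Hx. unfold g_fn.
  pose proof (two_mul_le_u_fn d (f_ln x) Hd (f_ln_ge0 x Hx)). lra.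
Qed.

Lemma g_fn_lt (d x y : R) : 0 < d <= 1 -> 0 <= x -> x < y -> g_fn d x < g_fn d y.
Proof.
  intros Hd Hx Hxy. unfold g_fn.
  apply u_fn_sub_id_lt; [exact Hd | apply f_ln_ge0, Hx | apply f_ln_lt; lra].
Qed.

Definition prim_inv_u (d t : R) : R := - d / ln (exp 1 + t).

Lemma prim_inv_u_0 (d : R) : prim_inv_u d 0 = - d.
Proof. unfold prim_inv_u. rewrite Rplus_0_r, ln_exp. field. Qed.

Lemma is_derive_prim_inv_u (d t : R) :
  d <> 0 -> 1 < exp 1 + t -> is_derive (prim_inv_u d) t (/ u_fn d t).
Proof.
  intros Hd Ht.
  assert (HL : 0 < ln (exp 1 + t)) by (rewrite <- ln_1; apply ln_increasing; lra).
  unfold prim_inv_u, u_fn. auto_derive.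
  - split; [lra | split; [lra | easy]].
  - field. lra.
Qed.

Lemma is_lim_prim_inv_u (d : R) : is_lim (prim_inv_u d) p_infty 0.
Proof.
  replace (Finite 0) with (Rbar_div (- d) p_infty) by (simpl; f_equal; ring).
  apply is_lim_div; [apply is_lim_const | apply is_lim_ln_add | easy | easy].
Qed.

Lemma continuous_inv_u_fn (d t : R) : 0 < d -> 0 <= t -> continuous (fun s => / u_fn d s) t.
Proof.
  intros Hd Ht. pose proof (one_le_ln_e_add t Ht). pose proof (exp_pos 1).
  apply (@ex_derive_continuous R_AbsRing R_NormedModule).
  unfold u_fn. auto_derive. rewrite Rmult_1_r.
  split; [lra | split; [| easy]].
  apply Rgt_not_eq. repeat apply Rmult_lt_0_compat; try lra. now apply Rinv_0_lt_compat.
Qed.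

Lemma continuous_integrand (d x : R) :
  0 < d -> 0 <= x -> continuous (fun y => Derive f_ln y / (f_ln y + g_fn d y)) x.
Proof.
  intros Hd Hx.
  apply (continuous_ext (fun y => Derive f_ln y * / u_fn d (f_ln y))).
  { intros y. now rewrite f_ln_add_g_fn. }
  apply (@continuous_mult R_UniformSpace R_AbsRing); [apply continuous_Derive_f_ln; lra |].
  apply (continuous_comp f_ln (fun t => / u_fn d t)).
  - apply (@ex_derive_continuous R_AbsRing R_NormedModule).
    eexists. apply is_derive_f_ln. lra.
  - apply continuous_inv_u_fn; [exact Hd | now apply f_ln_ge0].
Qed.

Lemma is_derive_prim_inv_u_f_ln (d x : R) : 0 < d -> 0 <= x ->
  is_derive (fun y => prim_inv_u d (f_ln y)) x (Derive f_ln x / (f_ln x + g_fn d x)).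
Proof.
  intros Hd Hx. rewrite f_ln_add_g_fn.
  apply (is_derive_comp (prim_inv_u d) f_ln).
  - pose proof (f_ln_ge0 x Hx). pose proof (exp_ineq1 1).
    apply is_derive_prim_inv_u; lra.
  - apply Derive_correct. eexists. apply is_derive_f_ln. lra.
Qed.

Theorem lemma7 (d : R) (hd : 0 < d) :
  (d <= 1 ->
     (forall x, 0 <= x -> f_ln x <= g_fn d x) /\
     (forall x y, 0 <= x -> x < y -> g_fn d x < g_fn d y)) /\
  is_RInt_gen (fun x => Derive f_ln x / (f_ln x + g_fn d x))
              (at_point 0) (Rbar_locally p_infty) d.
Proof.
  split.
  - intros hd1. split.
    + intros x. now apply f_ln_le_g_fn.
    + intros x y. now apply g_fn_lt.
  - replace d with (0 - prim_inv_u d (f_ln 0)) at 1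
      by (rewrite f_ln_0, prim_inv_u_0; ring).
    apply (is_RInt_gen_pinfty_derive _ (fun y => prim_inv_u d (f_ln y))).
    + intros x. now apply is_derive_prim_inv_u_f_ln.
    + intros x. now apply continuous_integrand.
    + apply (is_lim_comp (prim_inv_u d) f_ln p_infty 0 p_infty).
      * apply is_lim_prim_inv_u.
      * apply is_lim_f_ln.
      * now exists 0.
Qed.
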